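(* Let $G$ be a graph with vertex set $V$, each vertex carrying a finite-dimensional Hilbert space, let $\alpha$ be a QCA of range $R$, let $F\subseteq V$, and let $\mathcal{P}(\alpha,F)$ be the commutant of $\mathcal{A}(\mathrm{Int}(F))$ in $\alpha(\mathcal{A}(F))$. Then $\mathcal{P}(\alpha,F)$ is a $2R$-locally factorizable algebra.
   Context: For a set $S$ of sites, $\mathcal{A}(S)$ is the algebra of operators supported on $S$ (operators on $\bigotimes_{x\in S}\mathcal{H}_x$ tensored with the identity). A QCA of range $R$ is a $*$-automorphism $\alpha$ of the full operator algebra such that for each site $x$ and each $O$ supported on $\{x\}$, $\alpha(O)$ is supported on sites within graph distance $R$ of $x$. $\mathrm{Int}(F)=\{x: \text{all sites within distance } R \text{ of } x \text{ lie in } F\}$. An algebra $\mathcal{A}$ is $l$-locally factorizable if whenever $O\in\mathcal{A}$ is supported on $T_1\cup T_2$ with $T_1,T_2$ disjoint and $\mathrm{dist}(T_1,T_2)>l$, and $O=\sum_\beta A(\beta)O_1^\beta O_2^\beta$ is a singular value decomposition in the Hilbert–Schmidt inner product ($A(\beta)\ne0$, $O_i^\beta$ supported on $T_i$), then all $O_i^\beta\in\mathcal{A}$. *)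

From mathcomp Require Import all_boot all_algebra.
From mathcomp Require Import reals.
From mathcomp.real_closed Require Import complex.
Set Implicit Arguments. Unset Strict Implicit. Unset Printing Implicit Defensive.
Import GRing.Theory Num.Theory.
Local Open Scope ring_scope.

Fixpoint ball (V : finType) (e : rel V) (n : nat) (x : V) : {set V} :=
  match n with
  | 0 => [set x]
  | n'.+1 => ball e n' x :|: [set y | [exists z in ball e n' x, e z y]]
  end.

Definition setdist_gt (V : finType) (e : rel V) (l : nat) (T1 T2 : {set V}) : bool :=
  [forall x in T1, forall y in T2, y \notin ball e l x].

Definition interior (V : finType) (e : rel V) (r : nat) (F : {set V}) : {set V} :=
  [set x | ball e r x \subset F].

(* computational basis states of the full tensor product *)
Definition cfg (V : finType) (d : V -> nat) : finType :=
  {dffun forall x : V, 'I_(d x)}.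

(* operators on the full Hilbert space (matrices w.r.t. the product basis) *)
Definition op (V : finType) (d : V -> nat) (R : realType) :=
  'M[R[i]]_(#|{: cfg d}|).

Definition ent (V : finType) (d : V -> nat) (R : realType) (O : op d R)
  (s t : cfg d) : R[i] := O (enum_rank s) (enum_rank t).

Definition agree (V : finType) (d : V -> nat) (S : {set V}) (s t : cfg d) : bool :=
  [forall x in S, s x == t x].

(* O is supported on S, i.e. O = A (x) Id_{V \ S} with A an operator on
   the tensor product of the H_x, x in S: the entries are
   <s|O|t> = A(s|_S, t|_S) * delta(s|_{V\S}, t|_{V\S}). *)
Definition supported (V : finType) (d : V -> nat) (R : realType) (O : op d R)
  (S : {set V}) : Prop :=
  exists A : cfg d -> cfg d -> R[i],
    (forall s t s' t', agree S s s' -> agree S t t' -> A s t = A s' t') /\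
    (forall s t, ent O s t = if agree (~: S) s t then A s t else 0).

Definition adj (V : finType) (d : V -> nat) (R : realType) (O : op d R) : op d R :=
  (map_mx Num.conj O)^T.

Definition hs (V : finType) (d : V -> nat) (R : realType) (X Y : op d R) : R[i] :=
  \tr (adj X *m Y).

Definition star_aut (V : finType) (d : V -> nat) (R : realType)
  (alpha : op d R -> op d R) : Prop :=
  [/\ forall (a : R[i]) X Y, alpha (a *: X + Y) = a *: alpha X + alpha Y,
      forall X Y, alpha (X *m Y) = alpha X *m alpha Y,
      forall X, alpha (adj X) = adj (alpha X)
    & bijective alpha].

Definition QCA (V : finType) (e : rel V) (d : V -> nat) (R : realType) (r : nat)
  (alpha : op d R -> op d R) : Prop :=
  star_aut alpha /\
  forall (x : V) (O : op d R), supported O [set x] -> supported (alpha O) (ball e r x).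

Definition Palg (V : finType) (e : rel V) (d : V -> nat) (R : realType) (r : nat)
  (alpha : op d R -> op d R) (F : {set V}) (P : op d R) : Prop :=
  (exists O : op d R, supported O F /\ alpha O = P) /\
  (forall Q : op d R, supported Q (interior e r F) -> P *m Q = Q *m P).

Definition is_algebra (V : finType) (d : V -> nat) (R : realType)
  (Alg : op d R -> Prop) : Prop :=
  [/\ Alg 1%:M,
      forall (a : R[i]) X Y, Alg X -> Alg Y -> Alg (a *: X + Y)
    & forall X Y, Alg X -> Alg Y -> Alg (X *m Y)].

Definition locally_factorizable (V : finType) (e : rel V) (d : V -> nat)
  (R : realType) (l : nat) (Alg : op d R -> Prop) : Prop :=
  forall (O : op d R), Alg O ->
  forall (T1 T2 : {set V}), [disjoint T1 & T2] -> setdist_gt e l T1 T2 ->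
  supported O (T1 :|: T2) ->
  forall (k : nat) (A : 'I_k -> R[i]) (O1 O2 : 'I_k -> op d R),
    (* singular value decomposition in the Hilbert--Schmidt inner product *)
    (forall b, 0 < A b) ->
    (forall b b', hs (O1 b) (O1 b') = (b == b')%:R) ->
    (forall b b', hs (O2 b) (O2 b') = (b == b')%:R) ->
    (forall b, supported (O1 b) T1) ->
    (forall b, supported (O2 b) T2) ->
    O = \sum_(b < k) A b *: (O1 b *m O2 b) ->
    forall b, Alg (O1 b) /\ Alg (O2 b).

From mathcomp Require Import all_boot all_algebra.
From mathcomp Require Import reals.
From mathcomp.real_closed Require Import complex.
Set Implicit Arguments. Unset Strict Implicit. Unset Printing Implicit Defensive.
Import GRing.Theory Num.Theory.
Local Open Scope ring_scope.

(* An operator is supported on S iff it commutes with the matrix units of all sites outside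
   S.  Let O = sum_b A_b O1_b O2_b in P(alpha, F) be a Hilbert-Schmidt singular value
   decomposition with dist(T1, T2) > 2R, so that no R-ball meets both T1 and T2.  If Z is
   supported in a set avoiding T2 and commutes with O, then sum_b A_b [O1_b, Z] O2_b = 0
   with [O1_b, Z] supported off T2, and orthonormality of the O2_b forces [O1_b, Z] = 0.
   Taking Z = alpha(z) with z on a site outside F (so Z lives in an R-ball) shows that
   alpha^-1(O1_b) is supported on F; taking Z on a site of Int(F), which commutes with O
   by definition of P(alpha, F), shows that O1_b is supported off Int(F). *)

Section Configurations.
Variables (V : finType) (d : V -> nat).
Implicit Types (S : {set V}) (s t : cfg d).

Definition mix S s t : cfg d := [ffun x => if x \in S then s x else t x].

Lemma mixE S s t x : mix S s t x = if x \in S then s x else t x.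
Proof. by rewrite ffunE. Qed.

Lemma mix_id S s : mix S s s = s.
Proof. by apply/ffunP => x; rewrite mixE if_same. Qed.

Lemma mixC S s t : mix (~: S) s t = mix S t s.
Proof. by apply/ffunP => x; rewrite !mixE inE; case: (x \in S). Qed.

Lemma agreeP S s t : reflect (forall x, x \in S -> s x = t x) (agree S s t).
Proof. by apply: (iffP forall_inP) => H x /H; [move/eqP | move=> ->]. Qed.

Lemma agree_sym S s t : agree S s t = agree S t s.
Proof. by apply/agreeP/agreeP => h x /h. Qed.

Lemma agree_mix_out S s t : agree (~: S) (mix S t s) s.
Proof. by apply/agreeP => x; rewrite inE mixE => /negbTE ->. Qed.

End Configurations.

Section Operators.
Variables (V : finType) (d : V -> nat) (R : realType).
Implicit Types (B S T : {set V}) (s t u v w : cfg d) (X Y Z : op d R).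

Lemma op_ext X Y : (forall s t, ent X s t = ent Y s t) -> X = Y.
Proof.
by move=> eXY; apply/matrixP => i j; rewrite -(enum_valK i) -(enum_valK j); apply: eXY.
Qed.

Lemma entZ a X s t : ent (a *: X) s t = a * ent X s t.
Proof. by rewrite /ent mxE. Qed.

Lemma ent_sum k (X : 'I_k -> op d R) s t :
  ent (\sum_(b < k) X b) s t = \sum_(b < k) ent (X b) s t.
Proof. by rewrite /ent summxE. Qed.

Lemma ent0 s t : ent (0 : op d R) s t = 0.
Proof. by rewrite /ent mxE. Qed.

Lemma ent_mul X Y s t : ent (X *m Y) s t = \sum_u ent X s u * ent Y u t.
Proof.
rewrite /ent mxE (reindex (@enum_rank (cfg d))) //=.
by exists enum_val => x _; rewrite ?enum_valK ?enum_rankK.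
Qed.

Lemma supported_ent0 X S s t : supported X S -> ~~ agree (~: S) s t -> ent X s t = 0.
Proof. by case=> A [_ eX] /negbTE; rewrite eX => ->. Qed.

Lemma supported_entE X S s t s' t' : supported X S ->
  agree (~: S) s t -> agree (~: S) s' t' -> agree S s s' -> agree S t t' ->
  ent X s t = ent X s' t'.
Proof. by case=> A [AS eX] st st' ss' tt'; rewrite !eX st st'; apply: AS. Qed.

Lemma ent_mul_disjoint X Y S S' s t : supported X S -> supported Y S' ->
  [disjoint S & S'] -> ent (X *m Y) s t = ent X s (mix S t s) * ent Y (mix S t s) t.
Proof.
move=> hX hY SS'; rewrite ent_mul (bigD1 (mix S t s)) //= big1 ?addr0 // => u.
apply: contraNeq; rewrite mulf_eq0 negb_or => /andP [].
have [/agreeP su _|/(supported_ent0 hX)->] := boolP (agree (~: S) s u); last by rewrite eqxx.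
have [/agreeP ut _|/(supported_ent0 hY)->] := boolP (agree (~: S') u t); last by rewrite eqxx.
apply/eqP/ffunP => x; rewrite mixE; case: ifP => xS.
- by rewrite ut // inE (disjointFr SS' xS).
- by rewrite su // inE xS.
Qed.

Lemma agree_setU_mix S S' s t :
  agree (~: S') (mix S t s) t -> agree (~: (S :|: S')) s t.
Proof.
move/agreeP=> h; apply/agreeP => x; rewrite !inE negb_or => /andP [xS xS'].
by rewrite -h ?inE // mixE (negbTE xS).
Qed.

Lemma supported_disjoint_comm X Y S S' : supported X S -> supported Y S' ->
  [disjoint S & S'] -> comm_mx X Y.
Proof.
move=> hX hY SS'; apply: op_ext => s t; rewrite /comm_mx.
rewrite (ent_mul_disjoint _ _ hX hY SS') (ent_mul_disjoint _ _ hY hX) 1?disjoint_sym //.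
have [st | nst] := boolP (agree (~: (S :|: S')) s t); last first.
  rewrite (supported_ent0 hY (s := mix S t s)) ?(supported_ent0 hX (s := mix S' t s)) ?mulr0 //.
    by apply: contra nst; rewrite setUC; apply: agree_setU_mix.
  by apply: contra nst; apply: agree_setU_mix.
have {}st x : x \notin S -> x \notin S' -> s x = t x.
  by move=> xS xS'; apply: (agreeP _ _ _ st); rewrite !inE negb_or xS xS'.
rewrite mulrC; congr (_ * _); [apply: (supported_entE hY) | apply: (supported_entE hX)];
  apply/agreeP => x; rewrite ?inE !mixE;
  case: (boolP (x \in S)) => xS; case: (boolP (x \in S')) => xS' //=; rewrite ?st //;
  by rewrite (disjointFr SS' xS) in xS'.
Qed.

Definition orthonormal k (D : 'I_k -> op d R) :=
  forall b b', hs (D b) (D b') = (b == b')%:R.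

Lemma hs_sumr k X (a : 'I_k -> R[i]) (D : 'I_k -> op d R) :
  hs X (\sum_b a b *: D b) = \sum_b a b * hs X (D b).
Proof.
rewrite /hs mulmx_sumr (big_morph _ (@mxtraceD _ _) (mxtrace0 _ _)).
by apply: eq_bigr => b _; rewrite -scalemxAr mxtraceZ.
Qed.

Lemma orthonormal_free k (D : 'I_k -> op d R) a :
  orthonormal D -> \sum_b a b *: D b = 0 -> forall b, a b = 0.
Proof.
move=> onD Da0 b; have := congr1 (hs (D b)) Da0.
rewrite hs_sumr (bigD1 b) //= onD eqxx mulr1 big1 ?addr0 => [-> | b' b'b].
  by rewrite /hs mulmx0 mxtrace0.
by rewrite onD eq_sym (negbTE b'b) mulr0.
Qed.

Lemma sum_tensor_orthonormal_eq0 T k (a : 'I_k -> R[i]) (C D : 'I_k -> op d R) :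
  (forall b, supported (C b) (~: T)) -> (forall b, supported (D b) T) -> orthonormal D ->
  \sum_b a b *: (C b *m D b) = 0 -> forall b, a b *: C b = 0.
Proof.
move=> hC hD onD sum0 b0; apply: op_ext => s t; rewrite entZ ent0.
(* freeze the (~: T)-indices at (s, t) and pair with the orthonormal D b *)
pose g b := ent (C b) s (mix T s t).
have ag0 : forall b, a b * g b = 0.
  apply: (orthonormal_free onD); apply: op_ext => u v; rewrite ent_sum ent0.
  have [uv | nuv] := boolP (agree (~: T) u v); last first.
    by rewrite big1 // => b _; rewrite entZ (supported_ent0 (hD b) nuv) mulr0.
  transitivity (ent (\sum_b a b *: (C b *m D b)) (mix T u s) (mix T v t)); last first.
    by rewrite sum0 ent0.
  rewrite ent_sum; apply: eq_bigr => b _; rewrite !entZ -mulrA; congr (_ * _).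
  rewrite (ent_mul_disjoint _ _ (hC b) (hD b)) ?disjoints_subset //.
  have -> : mix (~: T) (mix T v t) (mix T u s) = mix T u t.
    by apply/ffunP => x; rewrite !mixE inE; case: (x \in T).
  congr (_ * _); [apply: (supported_entE (hC b)) | apply: (supported_entE (hD b))] => //;
    by apply/agreeP => x; rewrite ?inE ?negbK !mixE => xT; rewrite ?xT ?(negbTE xT).
have [/agreeP st | nst] := boolP (agree T s t); last first.
  by rewrite (supported_ent0 (hC b0)) ?setCK ?mulr0.
have mst : mix T s t = t by apply/ffunP => x; rewrite mixE; case: ifP => // /st.
by have := ag0 b0; rewrite /g mst.
Qed.

Definition site_delta (y : V) (p q : cfg d) : op d R :=
  \matrix_(i, j) [&& (enum_val i : cfg d) y == p y, (enum_val j : cfg d) y == q y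
                    & agree (~: [set y]) (enum_val i) (enum_val j)]%:R.

Lemma ent_site_delta y p q s t :
  ent (site_delta y p q) s t = [&& s y == p y, t y == q y & agree (~: [set y]) s t]%:R.
Proof. by rewrite /ent mxE !enum_rankK. Qed.

Lemma site_delta_supported y p q : supported (site_delta y p q) [set y].
Proof.
exists (fun s t => ((s y == p y) && (t y == q y))%:R); split.
- by move=> s t s' t' /agreeP ss' /agreeP tt'; rewrite ss' ?tt' ?inE.
- by move=> s t; rewrite ent_site_delta; case: (s y == p y); case: (t y == q y); case: agree.
Qed.

Lemma ent_site_delta_mul y p q X s t :
  ent (site_delta y p q *m X) s t = if s y == p y then ent X (mix [set y] q s) t else 0.
Proof.
rewrite ent_mul (bigD1 (mix [set y] q s)) //= big1 ?addr0 => [|u].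
  rewrite ent_site_delta mixE inE !eqxx agree_sym agree_mix_out.
  by case: eqP; rewrite ?mul1r ?mul0r.
apply: contraNeq; rewrite ent_site_delta mulf_eq0 negb_or pnatr_eq0 eqb0 negbK.
case/andP => /and3P [_ /eqP uy /agreeP su] _; apply/eqP/ffunP => x.
by rewrite mixE inE; case: eqP => [->|/eqP xy] //; rewrite su // !inE.
Qed.

Lemma ent_mul_site_delta y p q X s t :
  ent (X *m site_delta y p q) s t = if t y == q y then ent X s (mix [set y] p t) else 0.
Proof.
rewrite ent_mul (bigD1 (mix [set y] p t)) //= big1 ?addr0 => [|u].
  rewrite ent_site_delta mixE inE !eqxx agree_mix_out andbT.
  by case: eqP; rewrite ?mulr1 ?mulr0.
apply: contraNeq; rewrite ent_site_delta mulf_eq0 negb_or pnatr_eq0 eqb0 negbK.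
case/andP => _ /and3P [/eqP uy _ /agreeP ut]; apply/eqP/ffunP => x.
by rewrite mixE inE; case: eqP => [->|/eqP xy] //; rewrite ut // !inE.
Qed.

Section SiteCommutant.
Variables (X : op d R) (y : V).
Hypothesis comm_X : forall p q, comm_mx X (site_delta y p q).

Lemma comm_site_delta_ent0 s t : s y != t y -> ent X s t = 0.
Proof.
move=> sty; have := congr1 (fun M => ent M s t) (comm_X s s).
by rewrite /= ent_mul_site_delta ent_site_delta_mul eq_sym (negbTE sty) eqxx mix_id.
Qed.

Lemma comm_site_delta_ent_mix s t w :
  s y = t y -> ent X (mix [set y] w s) (mix [set y] w t) = ent X s t.
Proof.
move=> sty; have := congr1 (fun M => ent M s (mix [set y] w t)) (comm_X s w).
rewrite /= ent_mul_site_delta ent_site_delta_mul mixE inE !eqxx => <-.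
by congr (ent X s _); apply/ffunP => x; rewrite !mixE inE; case: eqP => [->|].
Qed.

End SiteCommutant.

Lemma comm_site_deltas_ent_mix X S s t w :
  (forall y, y \notin S -> forall p q, comm_mx X (site_delta y p q)) ->
  agree (~: S) s t -> ent X (mix (~: S) w s) (mix (~: S) w t) = ent X s t.
Proof.
move=> comm_X /agreeP st; rewrite -[~: S]set_enum.
have: {subset enum (~: S) <= ~: S} by move=> x; rewrite mem_enum.
elim: (enum _) => [|y l IHl] lS.
  by congr (ent X _ _); apply/ffunP => x; rewrite mixE inE.
have mix_cons r : mix [set x in y :: l] w r = mix [set y] w (mix [set x in l] w r).
  by apply/ffunP => x; rewrite !mixE !inE; case: eqP => [->|].
have yS : y \notin S by rewrite -in_setC lS ?mem_head.
rewrite !mix_cons comm_site_delta_ent_mix.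
- by apply: IHl => z zl; rewrite lS // inE zl orbT.
- exact: comm_X.
- by rewrite !mixE; case: ifP => // _; rewrite st // inE.
Qed.

Hypothesis d_gt0 : forall x, (0 < d x)%N.

Lemma supported_of_comm_site_deltas X S :
  (forall y, y \notin S -> forall p q, comm_mx X (site_delta y p q)) -> supported X S.
Proof.
move=> comm_X; pose c : cfg d := [ffun x => Ordinal (d_gt0 x)].
exists (fun s t => ent X (mix S s c) (mix S t c)); split.
  move=> s t s' t' /agreeP ss' /agreeP tt'.
  by congr (ent X _ _); apply/ffunP => x; rewrite !mixE;
    case: ifP => // xS; rewrite (ss', tt').
move=> s t; case: ifPn => [st | /forall_inPn [y]].
  by rewrite -(comm_site_deltas_ent_mix c comm_X st) !mixC.
by rewrite inE => yS; apply: comm_site_delta_ent0 (comm_X y yS) _ _.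
Qed.

Lemma supportedP X S : supported X S <->
  forall y, y \notin S -> forall Z, supported Z [set y] -> comm_mx X Z.
Proof.
split=> [hX y yS Z hZ | comm_X].
  by apply: supported_disjoint_comm hX hZ _; rewrite disjoint_sym disjoints1.
apply: supported_of_comm_site_deltas => y yS p q.
exact: comm_X yS _ (site_delta_supported y p q).
Qed.

Lemma supported_subset X S S' : S \subset S' -> supported X S -> supported X S'.
Proof.
move=> SS' /supportedP hX; apply/supportedP => y yS'; apply: hX.
by apply: contra yS'; apply: (subsetP SS').
Qed.

Lemma supported_mul X Y S : supported X S -> supported Y S -> supported (X *m Y) S.
Proof.
move=> /supportedP hX /supportedP hY; apply/supportedP => y yS Z hZ.
by apply/comm_mx_sym/comm_mxM; apply/comm_mx_sym; [apply: hX yS _ hZ | apply: hY yS _ hZ].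
Qed.

Lemma supported_scale_add a X Y S :
  supported X S -> supported Y S -> supported (a *: X + Y) S.
Proof.
move=> /supportedP hX /supportedP hY; apply/supportedP => y yS Z hZ.
by rewrite /comm_mx mulmxDl mulmxDr -scalemxAl -scalemxAr (hX y yS Z hZ) (hY y yS Z hZ).
Qed.

Lemma supported1 S : supported (1%:M : op d R) S.
Proof. by apply/supportedP => y _ Z _; apply: comm1mx. Qed.

Lemma factor_comm T1 T2 k (a : 'I_k -> R[i]) (P1 P2 : 'I_k -> op d R) X Z B :
  [disjoint T1 & T2] -> [disjoint B & T1] || [disjoint B & T2] ->
  (forall b, a b != 0) -> orthonormal P2 ->
  (forall b, supported (P1 b) T1) -> (forall b, supported (P2 b) T2) ->
  X = \sum_b a b *: (P1 b *m P2 b) -> supported Z B -> comm_mx X Z ->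
  forall b, comm_mx (P1 b) Z.
Proof.
move=> T12 /orP [BT1 | BT2] a0 onP2 hP1 hP2 defX hZ XZ b.
  by apply: supported_disjoint_comm (hP1 b) hZ _; rewrite disjoint_sym.
have hC b' : supported (P1 b' *m Z - Z *m P1 b') (~: T2).
  have hP1' : supported (P1 b') (~: T2).
    by apply: supported_subset (hP1 b'); rewrite -disjoints_subset.
  have hZ' : supported Z (~: T2) by apply: supported_subset hZ; rewrite -disjoints_subset.
  by rewrite addrC -scaleN1r; apply: supported_scale_add; apply: supported_mul.
have P2Z b' : comm_mx (P2 b') Z.
  by apply: supported_disjoint_comm (hP2 b') hZ _; rewrite disjoint_sym.
have sum0 : \sum_b a b *: ((P1 b *m Z - Z *m P1 b) *m P2 b) = 0.
  transitivity (X *m Z - Z *m X); last by rewrite XZ subrr.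
  rewrite defX mulmx_suml mulmx_sumr -sumrB; apply: eq_bigr => b' _.
  by rewrite mulmxBl -scalemxAl -scalemxAr -scalerBr -!mulmxA P2Z !mulmxA.
have := sum_tensor_orthonormal_eq0 hC hP2 onP2 sum0 b.
by move/eqP; rewrite scaler_eq0 (negbTE (a0 b)) subr_eq0 => /eqP.
Qed.

End Operators.

Lemma star_aut1 (V : finType) (d : V -> nat) (R : realType) (alpha : op d R -> op d R) :
  star_aut alpha -> alpha 1%:M = 1%:M.
Proof.
case=> _ alphaM _ [beta _ betaK].
have alpha1M (Z : op d R) : alpha 1%:M *m Z = Z by rewrite -(betaK Z) -alphaM mul1mx.
by rewrite -[alpha 1%:M]mulmx1 alpha1M.
Qed.

Section Balls.
Variables (V : finType) (e : rel V).

Lemma ball_center n x : x \in ball e n x.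
Proof. by elim: n => [|n IHn] /=; rewrite !inE ?IHn. Qed.

Lemma ball_trans m n x y z :
  y \in ball e n x -> z \in ball e m y -> z \in ball e (n + m) x.
Proof.
elim: m z => [|m IHm] z /=; first by rewrite addn0 inE => xy /eqP ->.
rewrite addnS /= !inE => xy /orP [yz | /exists_inP [w yw wz]]; first by rewrite IHm.
by apply/orP; right; apply/exists_inP; exists w => //; apply: IHm.
Qed.

Hypothesis e_sym : symmetric e.

Lemma ball_sym n x y : y \in ball e n x -> x \in ball e n y.
Proof.
elim: n x y => [|n IHn] x y /=; first by rewrite !inE eq_sym.
rewrite !inE => /orP [xy | /exists_inP [z xz zy]]; first by rewrite IHn.
have yz : z \in ball e 1 y.
  by rewrite /= !inE; apply/orP; right; apply/exists_inP; exists y; rewrite ?inE // e_sym.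
by have := ball_trans yz (IHn _ _ xz); rewrite add1n /= !inE.
Qed.

Lemma ball_disjoint_far_sets r T1 T2 : setdist_gt e (2 * r) T1 T2 ->
  forall y, [disjoint ball e r y & T1] || [disjoint ball e r y & T2].
Proof.
move=> farT y; case: (boolP [disjoint ball e r y & T1]) => //=.
case/pred0Pn => x1 /andP [x1y x1T1].
apply/pred0P => x2 /=; apply/negbTE/andP => [[x2y x2T2]].
move/forall_inP: farT => /(_ x1 x1T1) /forall_inP /(_ x2 x2T2).
by rewrite mul2n -addnn (ball_trans (ball_sym x1y) x2y).
Qed.

End Balls.

Section CommutantAlgebra.
Variables (V : finType) (e : rel V) (d : V -> nat) (R : realType).
Variables (r : nat) (alpha : op d R -> op d R) (F : {set V}).
Implicit Types (B T : {set V}) (X Z : op d R).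
Hypothesis d_gt0 : forall x, (0 < d x)%N.
Hypothesis alphaQCA : QCA e r alpha.

Lemma Palg_is_algebra : is_algebra (Palg e r alpha F).
Proof.
have [[alphaZD alphaM _ _] _] := alphaQCA; split.
- split=> [|Q _]; last by rewrite mul1mx mulmx1.
  by exists 1%:M; split; [apply: supported1 | apply: star_aut1; case: alphaQCA].
- move=> a X Y [[OX [hOX <-]] XI] [[OY [hOY <-]] YI]; split.
    by exists (a *: OX + OY); split; [apply: supported_scale_add | rewrite alphaZD].
  by move=> Q hQ; rewrite mulmxDl mulmxDr -scalemxAl -scalemxAr XI // YI.
- move=> X Y [[OX [hOX <-]] XI] [[OY [hOY <-]] YI]; split.
    by exists (OX *m OY); split; [apply: supported_mul | rewrite alphaM].
  by move=> Q hQ; apply/comm_mx_sym/comm_mxM; apply/comm_mx_sym; [apply: XI | apply: YI].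
Qed.

Lemma Palg_factor X T1 T2 k (a : 'I_k -> R[i]) (P1 P2 : 'I_k -> op d R) :
  Palg e r alpha F X -> [disjoint T1 & T2] ->
  (forall y, [disjoint ball e r y & T1] || [disjoint ball e r y & T2]) ->
  (forall b, a b != 0) -> orthonormal P2 ->
  (forall b, supported (P1 b) T1) -> (forall b, supported (P2 b) T2) ->
  X = \sum_b a b *: (P1 b *m P2 b) -> forall b, Palg e r alpha F (P1 b).
Proof.
move=> [[OX [hOX defX]] XI] T12 far a0 onP2 hP1 hP2 decX b.
have [[_ alphaM _ [beta alphaK betaK]] alpha_loc] := alphaQCA.
have P1comm B Z : [disjoint B & T1] || [disjoint B & T2] ->
    supported Z B -> comm_mx X Z -> comm_mx (P1 b) Z.
  by move=> BT hZ XZ; apply: factor_comm T12 BT a0 onP2 hP1 hP2 decX hZ XZ b.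
split.
- exists (beta (P1 b)); split; last by rewrite betaK.
  apply/supportedP => // y yF Z hZ; apply: (can_inj alphaK).
  rewrite !alphaM betaK; apply: P1comm (far y) (alpha_loc y Z hZ) _.
  move/(supportedP d_gt0): hOX => /(_ y yF Z hZ) OXZ.
  by rewrite -defX /comm_mx -!alphaM OXZ.
- move=> Q hQ.
  have hP1I : supported (P1 b) (~: interior e r F).
    apply/supportedP => // y; rewrite inE negbK => yI Z hZ.
    apply: (P1comm _ _ _ hZ); last first.
      by apply: XI; apply: (supported_subset d_gt0 _ hZ); rewrite sub1set.
    by case/orP: (far y) => yT; apply/orP; [left | right];
      apply: disjointWl yT; rewrite sub1set ball_center.
  by apply: supported_disjoint_comm hP1I hQ _; rewrite disjoints_subset.
Qed.

Lemma Palg_locally_factorizable :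
  symmetric e -> locally_factorizable e (2 * r) (Palg e r alpha F).
Proof.
move=> e_sym X PX T1 T2 T12 farT _ k a P1 P2 a_gt0 onP1 onP2 hP1 hP2 decX b.
have far := ball_disjoint_far_sets e_sym farT.
have a0 b' : a b' != 0 by apply: lt0r_neq0.
have decX' : X = \sum_b a b *: (P2 b *m P1 b).
  rewrite decX; apply: eq_bigr => b' _; congr (_ *: _).
  exact: supported_disjoint_comm (hP1 b') (hP2 b') T12.
have far' y : [disjoint ball e r y & T2] || [disjoint ball e r y & T1] by rewrite orbC.
split; first exact: Palg_factor PX T12 far a0 onP2 hP1 hP2 decX b.
by apply: Palg_factor PX _ far' a0 onP1 hP2 hP1 decX' b; rewrite disjoint_sym.
Qed.

End CommutantAlgebra.

Theorem mainTheorem18 (V : finType) (e : rel V) (d : V -> nat) (R : realType)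
  (r : nat) (alpha : op d R -> op d R) (F : {set V}) :
  irreflexive e -> symmetric e ->
  (forall x, 0 < d x)%N ->
  QCA e r alpha ->
  is_algebra (Palg e r alpha F) /\
  locally_factorizable e (2 * r) (Palg e r alpha F).
Proof.
move=> _ e_sym d_gt0 alphaQCA; split.
- exact: Palg_is_algebra.
- exact: Palg_locally_factorizable.
Qed.
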